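(* Let $X$ be a compact metric space, $f_1,f_2:X\to X$ continuous and $F=\{f_1,f_2\}$. The following are equivalent: (1) $F$ has the (Hausdorff metric) shadowing property; (2) $F^k$ has the shadowing property for every integer $k>1$; (3) $F^k$ has the shadowing property for some integer $k>1$.
   Context: Throughout, $(X,d)$ is a compact metric space, $\mathbb{N}=\{0,1,2,\dots\}$. $\mathbb{K}(X)$ is the set of nonempty compact subsets of $X$ with the Hausdorff metric $d_H(A,B)=\max\{\sup_{a\in A}\inf_{b\in B}d(a,b),\sup_{b\in B}\inf_{a\in A}d(a,b)\}$; a point $x$ is identified with $\{x\}$. Multiple mappings: $F=\{f_1,f_2\}$ maps $x$ to $F(x)=\{f_1(x),f_2(x)\}$; for $n\ge1$, $F^n(x)=\{f_{i_1}\cdots f_{i_n}(x): i_1,\dots,i_n\in\{1,2\}\}$, $F^0(x)=\{x\}$; for $A\in\mathbb{K}(X)$, $F^n(A)=\bigcup_{a\in A}F^n(a)$. For $k\ge1$, $F^k$ is regarded as the multiple mappings consisting of the $2^k$ maps $f_{i_1}\cdots f_{i_k}$, so $(F^k)^n=F^{kn}$. Shadowing: for $G=F$ or $G=F^k$, a sequence $\{A_n\}_{n\ge0}\subset\mathbb{K}(X)$ with $A_0$ a singleton is a $\delta$-pseudo orbit of $G$ if $d_H(G(A_n),A_{n+1})\le\delta$ for all $n\in\mathbb{N}$. $G$ has the shadowing property if for every $\epsilon>0$ there is $\delta>0$ such that for every $\delta$-pseudo orbit $\{A_n\}$ of $G$ there is $y\in X$ with $d_H(G^n(y),A_n)<\epsilon$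 for all $n\in\mathbb{N}$. *)

From mathcomp Require Import all_boot all_order all_algebra.
From mathcomp Require Import classical_sets reals.
From Stdlib Require List.
Set Implicit Arguments. Unset Strict Implicit. Unset Printing Implicit Defensive.
Import Order.TTheory GRing.Theory Num.Theory.
Local Open Scope classical_set_scope.
Local Open Scope ring_scope.

Section Defs.
Variables (R : realType) (X : Type) (d : X -> X -> R).

Definition is_metric : Prop :=
  [/\ (forall x y, 0 <= d x y),
      (forall x y, d x y = 0 <-> x = y),
      (forall x y, d x y = d y x) &
      (forall x y z, d x z <= d x y + d y z)].

Definition mopen (U : set X) : Prop :=
  forall x, U x -> exists2 e : R, 0 < e & forall y, d x y < e -> U y.

Definition mcompact (K : set X) : Prop :=
  forall (I : Type) (U : I -> set X),
    (forall i, mopen (U i)) ->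
    (forall x, K x -> exists i, U i x) ->
    exists s : list I, forall x, K x -> exists i, List.In i s /\ U i x.

Definition mcont (f : X -> X) : Prop :=
  forall x (e : R), 0 < e -> exists2 del : R, 0 < del &
    forall y, d x y < del -> d (f x) (f y) < e.

Definition inK (A : set X) : Prop := (exists x, A x) /\ mcompact A.

Definition dH (A B : set X) : R :=
  Num.max (sup [set inf [set d a b | b in B] | a in A])
          (sup [set inf [set d a b | a in A] | b in B]).

(* A multiple mapping is a finite list of maps G = {g_1,...,g_m}.
   G^n(A) = union over a in A of { g_{i1} ... g_{in} (a) }. *)
Fixpoint mm_iter (G : list (X -> X)) (n : nat) (A : set X) : set X :=
  match n with
  | O => A
  | S n' => fun z => exists f, List.In f G /\
              exists y, mm_iter G n' A y /\ z = f y
  end.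

(* F^k as a multiple mapping: the list of all compositions f_{i1} o ... o f_{ik} *)
Fixpoint mm_pow (G : list (X -> X)) (k : nat) : list (X -> X) :=
  match k with
  | O => [:: id]
  | S k' => [seq (fun x => f (g x)) | f <- G, g <- mm_pow G k']
  end.

Definition pseudo_orbit (G : list (X -> X)) (del : R) (A : nat -> set X) : Prop :=
  [/\ (forall n, inK (A n)),
      (exists x, A 0%N = [set x]) &
      (forall n, dH (mm_iter G 1 (A n)) (A n.+1) <= del)].

Definition shadowing (G : list (X -> X)) : Prop :=
  forall e : R, 0 < e -> exists2 del : R, 0 < del &
    forall A : nat -> set X, pseudo_orbit G del A ->
      exists y : X, forall n, dH (mm_iter G n [set y]) (A n) < e.

End Defs.

(* A pseudo orbit {B_n} of F^k is interpolated by the pseudo orbit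
   A_N = F^(N mod k)(B_(N div k)) of F, so a point shadowing {A_N} shadows
   {B_n} at the times kn.  Conversely, F, F^2, ..., F^k are uniformly continuous
   on K(X), so a sufficiently fine pseudo orbit {A_n} of F keeps F^j(A_n) close
   to A_(n+j) for all j <= k.  Hence {A_(kn)} is a pseudo orbit of F^k, and a
   point y shadowing it shadows {A_n} at the intermediate times too, since
   F^(kn+j)(y) = F^j(F^(kn)(y)) is close to F^j(A_(kn)), hence to A_(kn+j). *)

From mathcomp Require Import all_boot all_order all_algebra.
From mathcomp Require Import boolp classical_sets reals.
From Stdlib Require List.
Set Implicit Arguments. Unset Strict Implicit. Unset Printing Implicit Defensive.
Import Order.TTheory GRing.Theory Num.Theory.
Local Open Scope classical_set_scope.
Local Open Scope ring_scope.

Lemma In_cat (T : Type) (x : T) (s1 s2 : seq T) :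
  List.In x (s1 ++ s2) <-> List.In x s1 \/ List.In x s2.
Proof. by elim: s1 => [|a s1 IH] /=; [tauto | rewrite IH; tauto]. Qed.

Lemma In_map (T U : Type) (f : T -> U) (y : U) (s : seq T) :
  List.In y (map f s) <-> exists x, List.In x s /\ y = f x.
Proof.
elim: s => [|a s IH] /=; first by split=> [|[? []]].
rewrite IH; split=> [[<-|[x [sx ->]]]|[x [[<-|sx] ->]]].
- by exists a; split; first left.
- by exists x; split; first right.
- by left.
- by right; exists x.
Qed.

Lemma In_allpairs (T U V : Type) (f : T -> U -> V) (s : seq T) (t : seq U) h :
  List.In h [seq f a b | a <- s, b <- t] <->
  exists a b, [/\ List.In a s, List.In b t & h = f a b].
Proof.
elim: s => [|a s IH] /=; first by split=> [|[? [? []]]].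
rewrite In_cat In_map IH; split.
- case=> [[b [tb ->]]|[a' [b [sa' tb ->]]]].
    by exists a, b; split; first left.
  by exists a', b; split; first right.
- by case=> a' [b [[<-|sa'] tb ->]]; [left; exists b | right; exists a', b].
Qed.

Lemma In_ubound (R : realDomainType) (T : Type) (g : T -> R) (s : seq T) :
  exists M, forall t, List.In t s -> g t <= M.
Proof.
elim: s => [|a s [M sM]]; first by exists 0.
exists (Num.max (g a) M) => t /= [<-|st]; first by rewrite le_max lexx.
by rewrite le_max sM ?orbT.
Qed.

Lemma exists_pos_forall_In (R : realDomainType) (T : Type) (P : T -> R -> Prop)
    (s : seq T) :
  (forall t del del', 0 < del' -> del' <= del -> P t del -> P t del') ->
  (forall t, List.In t s -> exists2 del, 0 < del & P t del) ->
  exists2 del, 0 < del & forall t, List.In t s -> P t del.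
Proof.
move=> Pmono; elim: s => [|a s IH] sP; first by exists 1.
have [del del0 Pdel] := sP a (or_introl erefl).
have [del' del'0 Pdel'] := IH (fun t st => sP t (or_intror st)).
have min0 : 0 < Num.min del del' by rewrite lt_min del0 del'0.
exists (Num.min del del') => // t /= [<-|st].
- by apply: Pmono min0 _ Pdel; rewrite ge_min lexx.
- by apply: Pmono min0 _ (Pdel' t st); rewrite ge_min lexx orbT.
Qed.

Lemma exists_pos_forall_leq (R : realDomainType) (P : nat -> R -> Prop) (m : nat) :
  (forall j del del', 0 < del' -> del' <= del -> P j del -> P j del') ->
  (forall j, exists2 del, 0 < del & P j del) ->
  exists2 del, 0 < del & forall j, (j <= m)%N -> P j del.
Proof.
move=> Pmono jP; elim: m => [|m [del del0 Pdel]].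
  by have [del del0 Pdel] := jP 0%N; exists del => // j; rewrite leqn0 => /eqP ->.
have [del' del'0 Pdel'] := jP m.+1.
have min0 : 0 < Num.min del del' by rewrite lt_min del0 del'0.
exists (Num.min del del') => // j; rewrite leq_eqVlt => /orP[/eqP ->|jm].
- by apply: Pmono min0 _ Pdel'; rewrite ge_min lexx orbT.
- by apply: Pmono min0 _ (Pdel j jm); rewrite ge_min lexx.
Qed.

Lemma half_lt (R : numFieldType) (r : R) : 0 < r -> r / 2 < r.
Proof. by move=> r0; rewrite ltr_pdivrMr // ltr_pMr // ltr1n. Qed.

Lemma inf_image_le (R : realType) (U : Type) (f : U -> R) (B : set U) b :
  (forall b, 0 <= f b) -> B b -> inf [set f b | b in B] <= f b.
Proof. by move=> f0 Bb; apply: ge_inf; [exists 0 => _ [? _ <-] | exists b]. Qed.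

Lemma sup_inf_le (R : realType) (T U : Type) (g : T -> U -> R)
    (A : set T) (B : set U) (r : R) :
  (forall a b, 0 <= g a b) -> A !=set0 ->
  (forall a, A a -> exists2 b, B b & g a b < r) ->
  sup [set inf [set g a b | b in B] | a in A] <= r.
Proof.
move=> g0 [a0 Aa0] AB; apply: ge_sup; first by exists (inf [set g a0 b | b in B]), a0.
move=> _ [a Aa <-]; have [b Bb gab] := AB a Aa.
exact: le_trans (inf_image_le (g0 a) Bb) (ltW gab).
Qed.

Lemma sup_inf_lt (R : realType) (T U : Type) (g : T -> U -> R)
    (A : set T) (B : set U) (r M : R) :
  (forall a b, 0 <= g a b) -> (forall a b, g a b <= M) -> B !=set0 ->
  sup [set inf [set g a b | b in B] | a in A] < r ->
  forall a, A a -> exists2 b, B b & g a b < r.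
Proof.
move=> g0 gM [b0 Bb0] supr a Aa.
have supA : has_sup [set inf [set g a b | b in B] | a in A].
  split; first by exists (inf [set g a b | b in B]), a.
  by exists M => _ [a' _ <-]; apply: le_trans (inf_image_le (g0 a') Bb0) (gM a' b0).
have infr := le_lt_trans (sup_upper_bound supA (ex_intro2 _ _ a Aa erefl)) supr.
have image0 : [set g a b | b in B] !=set0 by exists (g a b0), b0.
by have [_ [b Bb <-] gab] := inf_lt image0 infr; exists b.
Qed.

Section Iteration.
Variables (X : Type) (G : seq (X -> X)).

Lemma mm_iterD j m A : mm_iter G (j + m) A = mm_iter G j (mm_iter G m A).
Proof. by elim: j => [|j IH] //=; rewrite IH. Qed.

Lemma mm_iter1_cons g A : mm_iter (g :: G) 1 A = g @` A `|` mm_iter G 1 A.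
Proof.
apply/seteqP; split=> [_ [f [[<-|Gf] [y [Ay ->]]]]|_ [[y Ay <-]|[f [Gf [y [Ay ->]]]]]].
- by left; exists y.
- by right; exists f; split => //; exists y.
- by exists g; split; [left | exists y].
- by exists f; split; [right | exists y].
Qed.

Lemma mm_iter_pow1 k A : mm_iter (mm_pow G k) 1 A = mm_iter G k A.
Proof.
elim: k => [|k IH]; apply: funext => z; apply: propext.
  by split=> [[f [[<-|[]] [y [Ay ->]]]]|Az] //; exists id; split; [left|exists z].
rewrite /= -IH; split.
- case=> h [/In_allpairs[f [g [Gf Gg ->]]] [y [Ay ->]]].
  by exists f; split => //; exists (g y); split => //; exists g; split => //; exists y.
- case=> f [Gf [w [[g [Gg [y [Ay ->]]]] ->]]].
  by exists (fun x => f (g x)); split; [apply/In_allpairs; exists f, g | exists y].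
Qed.

Lemma mm_iter_pow k n A : mm_iter (mm_pow G k) n A = mm_iter G (k * n) A.
Proof.
elim: n => [|n IH]; first by rewrite muln0.
rewrite -[mm_iter _ n.+1 A]/(mm_iter (mm_pow G k) 1 (mm_iter (mm_pow G k) n A)).
by rewrite mm_iter_pow1 IH mulnS mm_iterD.
Qed.

End Iteration.

Section MetricSpace.
Variables (R : realType) (X : Type) (d : X -> X -> R).
Hypothesis d_metric : is_metric d.
Hypothesis X_compact : mcompact d setT.

Lemma metric_ge0 x y : 0 <= d x y. Proof. by case: d_metric. Qed.
Lemma metric_xx x : d x x = 0. Proof. by case: d_metric => _ dE _ _; apply/dE. Qed.
Lemma metric_sym x y : d x y = d y x. Proof. by case: d_metric. Qed.
Lemma metric_triangle x y z : d x z <= d x y + d y z. Proof. by case: d_metric. Qed.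

Lemma mopen_ball c r : mopen d [set y | d c y < r].
Proof.
move=> x /= cx; exists (r - d c x); first by rewrite subr_gt0.
by move=> y xy; apply: le_lt_trans (metric_triangle c x y) _; rewrite -ltrBrDl.
Qed.

Lemma mopen_preimage (g : X -> X) (U : set X) :
  mcont d g -> mopen d U -> mopen d (g @^-1` U).
Proof.
move=> cg oU x Ugx; have [e e0 eU] := oU _ Ugx.
by have [del del0 gdel] := cg x e e0; exists del => // y /gdel/eU.
Qed.

Lemma mcompact_image g A : mcont d g -> mcompact d A -> mcompact d (g @` A).
Proof.
move=> cg cA I U oU cover.
have [s scover] := cA I (fun i => g @^-1` U i) (fun i => mopen_preimage cg (oU i))
  (fun x Ax => cover _ (imageP g Ax)).
by exists s => _ [x Ax <-]; apply: scover.
Qed.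

Lemma mcompact_setU A B : mcompact d A -> mcompact d B -> mcompact d (A `|` B).
Proof.
move=> cA cB I U oU cover.
have [s1 s1cover] := cA I U oU (fun x Ax => cover x (or_introl Ax)).
have [s2 s2cover] := cB I U oU (fun x Bx => cover x (or_intror Bx)).
exists (s1 ++ s2) => x [/s1cover|/s2cover] [i [si Ui]]; exists i; split => //.
  by apply/In_cat; left.
by apply/In_cat; right.
Qed.

Lemma metric_bounded : exists M, forall x y, d x y <= M.
Proof.
have balls : forall x, setT x -> exists c, d c x < 1.
  by move=> x _; exists x; rewrite metric_xx.
have [s cover] := X_compact (fun c => @mopen_ball c 1) balls.
have [M sM] := In_ubound (fun p => d p.1 p.2) (allpairs pair s s).
exists (1 + M + 1) => x y; rewrite -addrA.
have [a [sa xa]] := cover x I; have [b [sb yb]] := cover y I.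
apply: le_trans (metric_triangle x a y) _; apply: lerD; first by rewrite metric_sym ltW.
apply: le_trans (metric_triangle a b y) _; apply: lerD; last exact: ltW.
by apply: (sM (a, b)); apply/In_allpairs; exists a, b.
Qed.

Definition hnear (r : R) (A B : set X) :=
  (forall a, A a -> exists2 b, B b & d a b < r) /\
  (forall b, B b -> exists2 a, A a & d a b < r).

Lemma dH_le_hnear r A B : A !=set0 -> B !=set0 -> hnear r A B -> dH d A B <= r.
Proof.
move=> A0 B0 [AB BA]; rewrite /dH ge_max (sup_inf_le metric_ge0 A0 AB).
exact: (sup_inf_le (g := fun b a => d a b)) (fun b a => metric_ge0 a b) B0 BA.
Qed.

Lemma hnear_dH_lt r A B : A !=set0 -> B !=set0 -> dH d A B < r -> hnear r A B.
Proof.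
have [M dM] := metric_bounded.
move=> A0 B0; rewrite /dH gt_max => /andP[AB BA]; split.
- exact: sup_inf_lt metric_ge0 dM B0 AB.
- exact: (sup_inf_lt (g := fun b a => d a b))
    (fun b a => metric_ge0 a b) (fun b a => dM a b) A0 BA.
Qed.

Lemma hnear_refl r A : 0 < r -> hnear r A A.
Proof. by move=> r0; split=> a Aa; exists a; rewrite ?metric_xx. Qed.

Lemma hnear_le r r' A B : r <= r' -> hnear r A B -> hnear r' A B.
Proof.
move=> rr' [AB BA]; split.
- by move=> a /AB[b Bb ab]; exists b => //; apply: lt_le_trans rr'.
- by move=> b /BA[a Aa ab]; exists a => //; apply: lt_le_trans rr'.
Qed.

Lemma hnear_trans r s A B C : hnear r A B -> hnear s B C -> hnear (r + s) A C.
Proof.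
move=> [AB BA] [BC CB]; split.
- move=> a /AB[b /BC[c Cc bc] ab]; exists c => //.
  by apply: le_lt_trans (metric_triangle a b c) _; apply: ltrD.
- move=> c /CB[b /BA[a Aa ab] bc]; exists a => //.
  by apply: le_lt_trans (metric_triangle a b c) _; apply: ltrD.
Qed.

Definition ucont (f : X -> X) := forall e, 0 < e -> exists2 del, 0 < del &
  forall x y, d x y < del -> d (f x) (f y) < e.

Lemma mcont_ucont f : mcont d f -> ucont f.
Proof.
move=> cf e e0; have e20 : 0 < e / 2 by rewrite divr_gt0.
pose goodball :=
  {p : X * R | 0 < p.2 /\ forall y, d p.1 y < p.2 -> d (f p.1) (f y) < e / 2}.
have balls : forall x, setT x -> exists i : goodball, d (sval i).1 x < (sval i).2 / 2.
  move=> x _; have [r r0 fr] := cf x (e / 2) e20.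
  by exists (exist _ (x, r) (conj r0 fr)); rewrite /= metric_xx divr_gt0.
have [s cover] :=
  X_compact (fun i : goodball => @mopen_ball (sval i).1 ((sval i).2 / 2)) balls.
have [m m0 sm] :
    exists2 m, 0 < m & forall i : goodball, List.In i s -> m <= (sval i).2 / 2.
  apply: exists_pos_forall_In => [i m m' _ m'm /(le_trans m'm) //|[[x r] [/= r0 _]] _].
  by exists (r / 2); rewrite ?divr_gt0.
exists m => // y z yz; have [i [si xy]] := cover y I.
move: (sm i si) xy; case: i {si} => -[x r] [r0 fr] /= mr xy.
have xz : d x z < r.
  apply: le_lt_trans (metric_triangle x y z) _; rewrite [r]splitr.
  by apply: ltrD => //; apply: lt_le_trans mr.
apply: le_lt_trans (metric_triangle (f y) (f x) (f z)) _; rewrite [e]splitr metric_sym.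
by apply: ltrD; apply: fr => //; apply: lt_trans (half_lt r0).
Qed.

Section MultipleMapping.
Variable G : seq (X -> X).
Hypothesis G_nonempty : exists g, List.In g G.
Hypothesis G_cont : forall g, List.In g G -> mcont d g.

Lemma mm_iter_nonempty n A : A !=set0 -> mm_iter G n A !=set0.
Proof.
have [g Gg] := G_nonempty.
by move=> A0; elim: n => [|n [z Gz]] //; exists (g z), g; split => //; exists z.
Qed.

Lemma mcompact_mm_iter1 A : mcompact d A -> mcompact d (mm_iter G 1 A).
Proof.
move: G_cont; elim: G => [|g G' IH] Gc cA.
  by move=> I U _ _; exists nil => z [f [[] _]].
rewrite mm_iter1_cons; apply: mcompact_setU.
  exact: mcompact_image (Gc g (or_introl erefl)) cA.
by apply: IH => // h G'h; apply: Gc; right.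
Qed.

Lemma inK_mm_iter n A : inK d A -> inK d (mm_iter G n A).
Proof.
move=> [A0 cA]; split; first exact: mm_iter_nonempty.
by elim: n => [|n IH] //; apply: mcompact_mm_iter1.
Qed.

Lemma pseudo_orbit_le del del' A : del <= del' ->
  pseudo_orbit d G del A -> pseudo_orbit d G del' A.
Proof. by move=> dd' [AK A0 AG]; split => // n; apply: le_trans (AG n) dd'. Qed.

Lemma pseudo_orbit_interpolate k del B : (0 < k)%N -> 0 < del ->
  pseudo_orbit d (mm_pow G k) del B ->
  pseudo_orbit d G del (fun N => mm_iter G (N %% k) (B (N %/ k)%N)).
Proof.
move=> k0 del0 [BK [x0 B0] BG]; split; first by move=> N; apply: inK_mm_iter.
  by exists x0; rewrite mod0n div0n.
move=> N; set q := (N %/ k)%N; set r := (N %% k)%N.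
have NE : N.+1 = (q * k + r.+1)%N by rewrite [in LHS](divn_eq N k) addnS.
have rk : (r < k)%N by rewrite ltn_pmod.
rewrite -[mm_iter G 1 _]/(mm_iter G r.+1 (B q)).
have [rk1|kr] := ltnP r.+1 k.
  rewrite NE modnMDl modn_small // divnMDl // divn_small // addn0.
  have Bq0 : mm_iter G r.+1 (B q) !=set0 by apply: mm_iter_nonempty; case: (BK q).
  by apply: (dH_le_hnear Bq0 Bq0); apply: hnear_refl.
have rk1 : r.+1 = k by apply/eqP; rewrite eqn_leq kr rk.
rewrite NE rk1 -mulSnr modnMl mulnK // -mm_iter_pow1; exact: BG.
Qed.

Lemma shadowing_pow k : (0 < k)%N -> shadowing d G -> shadowing d (mm_pow G k).
Proof.
move=> k0 shG e e0; have [del del0 shdel] := shG e e0.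
exists del => // B /(pseudo_orbit_interpolate k0 del0)/shdel[y shy].
exists y => n; have := shy (k * n)%N.
by rewrite mulnC modnMl mulnK // mulnC -mm_iter_pow.
Qed.

Lemma mm_ucont e : 0 < e -> exists2 del, 0 < del &
  forall g, List.In g G -> forall x y, d x y < del -> d (g x) (g y) < e.
Proof.
move=> e0; apply: exists_pos_forall_In => [g del del' _ del'del gdel x y xy|g Gg].
  by apply: gdel; apply: lt_le_trans del'del.
exact: mcont_ucont (G_cont Gg) e e0.
Qed.

Lemma hnear_mm_iter1 e : 0 < e -> exists2 del, 0 < del &
  forall A B, hnear del A B -> hnear e (mm_iter G 1 A) (mm_iter G 1 B).
Proof.
move=> e0; have [del del0 Gdel] := mm_ucont e0.
exists del => // A B [AB BA]; split.
- move=> _ [g [Gg [a [Aa ->]]]]; have [b Bb ab] := AB a Aa.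
  by exists (g b); [exists g; split => //; exists b | apply: Gdel].
- move=> _ [g [Gg [b [Bb ->]]]]; have [a Aa ab] := BA b Bb.
  by exists (g a); [exists g; split => //; exists a | apply: Gdel].
Qed.

Lemma hnear_mm_iter j e : 0 < e -> exists2 del, 0 < del &
  forall A B, hnear del A B -> hnear e (mm_iter G j A) (mm_iter G j B).
Proof.
elim: j e => [|j IH] e e0; first by exists e.
have [del1 del10 near1] := hnear_mm_iter1 e0.
have [del del0 near] := IH del1 del10.
by exists del => // A B /near/near1.
Qed.

Lemma hnear_mm_iter_leq m e : 0 < e -> exists2 del, 0 < del &
  forall j, (j <= m)%N -> forall A B, hnear del A B ->
    hnear e (mm_iter G j A) (mm_iter G j B).
Proof.
move=> e0; apply: exists_pos_forall_leq => [j del del' _ del'del near A B|j].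
  by move/(hnear_le del'del)/near.
exact: hnear_mm_iter.
Qed.

Lemma pseudo_orbit_drift j t : 0 < t -> exists2 del, 0 < del &
  forall A, pseudo_orbit d G del A ->
    forall n, hnear t (mm_iter G j (A n)) (A (j + n)%N).
Proof.
elim: j t => [|j IH] t t0; first by exists t => // A _ n; apply: hnear_refl.
have t20 : 0 < t / 2 by rewrite divr_gt0.
have [eta eta0 near1] := hnear_mm_iter1 t20.
have [del1 del10 drift] := IH eta eta0.
have min0 : 0 < Num.min del1 (t / 2 / 2) by rewrite lt_min del10 divr_gt0.
exists (Num.min del1 (t / 2 / 2)) => // A PA n; have [AK _ AG] := PA.
have step : hnear (t / 2) (mm_iter G 1 (A (j + n)%N)) (A (j + n).+1).
  apply: hnear_dH_lt; first by apply: mm_iter_nonempty; case: (AK (j + n)%N).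
    by case: (AK (j + n).+1).
  apply: le_lt_trans (AG _) (le_lt_trans _ (half_lt t20)).
  by rewrite ge_min lexx orbT.
rewrite addSn [t]splitr; apply: hnear_trans step.
by apply: near1; apply: drift; apply: pseudo_orbit_le PA; rewrite ge_min lexx.
Qed.

Lemma pseudo_orbit_drift_leq m t : 0 < t -> exists2 del, 0 < del &
  forall j, (j <= m)%N -> forall A, pseudo_orbit d G del A ->
    forall n, hnear t (mm_iter G j (A n)) (A (j + n)%N).
Proof.
move=> t0; apply: exists_pos_forall_leq => [j del del' _ del'del drift A|j].
  by move/(pseudo_orbit_le del'del)/drift.
exact: pseudo_orbit_drift.
Qed.

Lemma pseudo_orbit_sample k del del' A : pseudo_orbit d G del A ->
  (forall n, hnear del' (mm_iter G k (A n)) (A (k + n)%N)) ->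
  pseudo_orbit d (mm_pow G k) del' (fun n => A (k * n)%N).
Proof.
move=> [AK [x0 A0] _] drift; split => //; first by exists x0; rewrite muln0.
have Ane m : A m !=set0 by case: (AK m).
move=> n; rewrite mm_iter_pow1 /= mulnS.
by apply: dH_le_hnear (drift _) => //; apply: mm_iter_nonempty.
Qed.

Lemma shadowing_of_pow k : (0 < k)%N -> shadowing d (mm_pow G k) -> shadowing d G.
Proof.
move=> k0 shGk e e0; have e40 : 0 < e / 2 / 2 by rewrite !divr_gt0.
have [eta eta0 near] := hnear_mm_iter_leq k e40.
have [del' del'0 shdel'] := shGk eta eta0.
have t0 : 0 < Num.min (e / 2 / 2) del' by rewrite lt_min e40.
have [del del0 drift] := pseudo_orbit_drift_leq k t0.
exists del => // A PA.
have Ane m : A m !=set0 by case: PA => AK _ _; case: (AK m).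
have driftk n : hnear del' (mm_iter G k (A n)) (A (k + n)%N).
  by apply: hnear_le (drift k (leqnn k) A PA n); rewrite ge_min lexx orbT.
have [y shy] := shdel' _ (pseudo_orbit_sample PA driftk).
exists y => N; have -> : N = (N %% k + k * (N %/ k))%N by rewrite addnC mulnC -divn_eq.
have jk : (N %% k <= k)%N by rewrite ltnW // ltn_pmod.
set j := (N %% k)%N in jk *; set n := (N %/ k)%N.
rewrite mm_iterD -mm_iter_pow.
have orbit0 : mm_iter (mm_pow G k) n [set y] !=set0.
  by rewrite mm_iter_pow; apply: mm_iter_nonempty; exists y.
have close : hnear eta (mm_iter (mm_pow G k) n [set y]) (A (k * n)%N).
  exact: hnear_dH_lt orbit0 (Ane _) (shy n).
apply: le_lt_trans (half_lt e0); apply: dH_le_hnear => //; first exact: mm_iter_nonempty.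
rewrite [e / 2]splitr; apply: hnear_trans (near j jk _ _ close) _.
by apply: hnear_le (drift j jk A PA _); rewrite ge_min lexx.
Qed.

End MultipleMapping.
End MetricSpace.

Theorem theorem4p1 (R : realType) (X : Type) (d : X -> X -> R) (f1 f2 : X -> X) :
  is_metric d -> mcompact d setT -> mcont d f1 -> mcont d f2 ->
  let F := [:: f1; f2] in
  (shadowing d F <-> (forall k : nat, (1 < k)%N -> shadowing d (mm_pow F k))) /\
  ((forall k : nat, (1 < k)%N -> shadowing d (mm_pow F k)) <->
   (exists2 k : nat, (1 < k)%N & shadowing d (mm_pow F k))).
Proof.
move=> d_metric X_compact f1_cont f2_cont F.
have F_nonempty : exists g, List.In g F by exists f1; left.
have F_cont g : List.In g F -> mcont d g by case=> [<-|[<-|[]]].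
have pow := shadowing_pow d_metric F_nonempty F_cont.
have root := shadowing_of_pow d_metric X_compact F_nonempty F_cont.
split; split.
- by move=> shF k /ltnW k0; apply: pow.
- by move=> shFk; apply: (root 2%N) => //; apply: shFk.
- by move=> shFk; exists 2%N => //; apply: shFk.
- by case=> k /ltnW k0 shFk j /ltnW j0; apply: pow j0 (root k k0 shFk).
Qed.
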